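(* Let $(X,\mathcal{A})$ be a measurable space, $f_1,f_2\in\mathcal{F}^{(X,\mathcal{A})}$ comonotone, and $\star:[0,\infty)^2\to[0,\infty)$ continuous, non-decreasing in both arguments and bounded from above by the minimum ($a\star b\le\min(a,b)$). Let $\omega_j,\xi_j\in(0,\infty)$, $j=0,1,2$, be such that $x^{1/(\xi_0\omega_0)}\le x\le x^{1/(\xi_i\omega_i)}$ and $x\ge x^{\omega_i/\omega_0}$ for all $x\in[0,\infty)$ and $i=1,2$, and let $m\in\mathcal{M}^{(X,\mathcal{A})}$ be a monotone measure with $\mathbf{Su}(m,f_i^{\xi_i})<\infty$, $i=1,2$. Then \[ \big[\mathbf{Su}\big(m,(f_1\star f_2)^{\xi_0}\big)\big]^{\omega_0}\ \ge\ \big[\mathbf{Su}(m,f_1^{\xi_1})\big]^{\omega_1}\star\big[\mathbf{Su}(m,f_2^{\xi_2})\big]^{\omega_2}. \]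
   Context: A monotone measure on $(X,\mathcal{A})$ is $m:\mathcal{A}\to[0,\infty]$ with $m(\emptyset)=0$, $m(X)>0$, $m(A)\le m(B)$ for $A\subseteq B$; $\mathcal{M}^{(X,\mathcal{A})}$ is the set of these; $\mathcal{F}^{(X,\mathcal{A})}$ the set of $\mathcal{A}$-measurable $f:X\to[0,\infty]$. $\mathbf{Su}(m,f)=\sup\{\min(t,m(\{f\ge t\})) : t\in(0,\infty]\}$. $f_1,f_2$ are comonotone if $(f_1(x)-f_1(y))(f_2(x)-f_2(y))\ge0$ for all $x,y$. Operations on functions are pointwise. *)

From HB Require Import structures.
From mathcomp Require Import all_boot all_order all_algebra.
From mathcomp Require Import all_classical all_reals all_analysis.
From mathcomp Require Import lebesgue_measure measurable_realfun.
Set Implicit Arguments. Unset Strict Implicit. Unset Printing Implicit Defensive.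
Import Order.TTheory GRing.Theory Num.Theory.
Import numFieldNormedType.Exports.
Local Open Scope classical_set_scope.
Local Open Scope ring_scope.

(* A monotone measure on (X, A): m : A -> [0, +oo], m(empty) = 0, m(X) > 0,
   monotone w.r.t. inclusion of measurable sets.  (Values of m on
   non-measurable sets are irrelevant.) *)
Definition monotone_measure (d : measure_display) (X : measurableType d)
    (R : realType) (m : set X -> \bar R) : Prop :=
  [/\ (forall A, measurable A -> (0 <= m A)%E),
      m set0 = 0%E,
      (0 < m setT)%E &
      (forall A B, measurable A -> measurable B -> A `<=` B -> (m A <= m B)%E)].

Definition nonneg_measurable (d : measure_display) (X : measurableType d)
    (R : realType) (f : X -> \bar R) : Prop :=
  measurable_fun setT f /\ (forall x, (0 <= f x)%E).

Definition Su (d : measure_display) (X : measurableType d) (R : realType)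
    (m : set X -> \bar R) (f : X -> \bar R) : \bar R :=
  ereal_sup [set Order.min t (m [set x | (t <= f x)%E]) | t in [set t : \bar R | (0 < t)%E]].

(* Comonotonicity: (f1 x - f1 y)(f2 x - f2 y) >= 0 for all x, y, written in
   the order form (valid also for the value +oo): it is never the case that
   f1 x < f1 y while f2 y < f2 x. *)
Definition comonotone (X : Type) (R : realType) (f1 f2 : X -> \bar R) : Prop :=
  forall x y, ~ ((f1 x < f1 y)%E /\ (f2 y < f2 x)%E).

(* Extension of a binary operation s on [0,oo) to [0,oo] by monotone limits
   (s is non-decreasing, so these sups are the limits). *)
Definition estar (R : realType) (s : R -> R -> R) (a b : \bar R) : \bar R :=
  match a, b with
  | a'%:E, b'%:E => (s a' b')%:E
  | a'%:E, +oo%E => ereal_sup [set (s a' n%:R)%:E | n in [set: nat]]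
  | +oo%E, b'%:E => ereal_sup [set (s n%:R b')%:E | n in [set: nat]]
  | +oo%E, +oo%E => ereal_sup [set (s n%:R n%:R)%:E | n in [set: nat]]
  | _, _ => 0%E
  end.

Definition star_hyp (R : realType) (s : R -> R -> R) : Prop :=
  [/\ {within [set p : R * R | 0 <= p.1 /\ 0 <= p.2],
        continuous (fun p : R * R => s p.1 p.2)},
      (forall a a' b b', 0 <= a -> 0 <= b -> a <= a' -> b <= b' ->
          s a b <= s a' b'),
      (forall a b, 0 <= a -> 0 <= b -> 0 <= s a b) &
      (forall a b, 0 <= a -> 0 <= b -> s a b <= Num.min a b)].

(* The hypotheses on the exponents force [xi_i = 1 / w_i] and [w_1 = w_2 = w_0]
   (test them at [x = 2] and [x = 1/2]).  With [w := w_0], [g_i := f_i^(1/w)]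
   and [h := (f_1 ⋆ f_2)^(1/w)] the claim becomes
   [Su(g_1)^w ⋆ Su(g_2)^w <= Su(h)^w].  By comonotonicity the superlevel sets
   [{g_1 >= t_1}] and [{g_2 >= t_2}] are nested, so their intersection, on which
   [h >= (t_1^w ⋆ t_2^w)^(1/w)], is as heavy as one of them.  Since [⋆] lies
   below [min], this bounds [c_1^w ⋆ c_2^w] by [Su(h)^w] for all the terms
   [c_i = min(t_i, m{g_i >= t_i})] of the suprema defining [Su(g_i)], and
   continuity of [⋆] passes the bound to the suprema.  Measurability of
   [f_1 ⋆ f_2] comes from writing [{f_1 ⋆ f_2 > r}] as a countable union over
   rational levels. *)

From HB Require Import structures.
From mathcomp Require Import all_boot all_order all_algebra.
From mathcomp Require Import all_classical all_reals all_analysis.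
From mathcomp Require Import lebesgue_measure measurable_realfun.
From mathcomp Require Import lra.
Set Implicit Arguments. Unset Strict Implicit. Unset Printing Implicit Defensive.
Import Order.TTheory GRing.Theory Num.Theory.
Import numFieldNormedType.Exports.
Local Open Scope classical_set_scope.
Local Open Scope ring_scope.

Section powR_facts.
Variable R : realType.
Implicit Types a c e w x y : R.

Lemma ler_powR_lnE c x y : 0 < c -> (c `^ x <= c `^ y) = (x * ln c <= y * ln c).
Proof. by move=> c0; rewrite /powR gt_eqF // ler_expR. Qed.

Lemma powR_le_id_eq1 a : (forall x, 0 <= x -> x `^ a <= x) -> a = 1.
Proof.
have V2 : 0 < 2^-1 :> R by lra.
move=> le_id; apply/eqP; rewrite eq_le; apply/andP; split.
  have := le_id 2 (ler0n R 2); rewrite -{2}(powRr1 (ler0n R 2)).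
  by rewrite ler_powR_lnE // ler_pM2r // ln_gt0 // ltr1n.
have := le_id _ (ltW V2); rewrite -{2}(powRr1 (ltW V2)).
by rewrite ler_powR_lnE // ler_nM2r // ln_lt0 // V2; lra.
Qed.

Lemma powR_ge_id_eq1 a : (forall x, 0 <= x -> x <= x `^ a) -> a = 1.
Proof.
have V2 : 0 < 2^-1 :> R by lra.
move=> ge_id; apply/eqP; rewrite eq_le; apply/andP; split.
  have := ge_id _ (ltW V2); rewrite -{1}(powRr1 (ltW V2)).
  by rewrite ler_powR_lnE // ler_nM2r // ln_lt0 // V2; lra.
have := ge_id 2 (ler0n R 2); rewrite -{1}(powRr1 (ler0n R 2)).
by rewrite ler_powR_lnE // ler_pM2r // ln_gt0 // ltr1n.
Qed.

Lemma powRVK w a : 0 < w -> 0 <= a -> (a `^ w^-1) `^ w = a.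
Proof. by move=> w0 a0; rewrite -powRrM mulVf ?gt_eqF // powRr1. Qed.

Lemma powRKV w a : 0 < w -> 0 <= a -> (a `^ w) `^ w^-1 = a.
Proof. by move=> w0 a0; rewrite -powRrM mulfV ?gt_eqF // powRr1. Qed.

Lemma powR_left_approx w a e : 0 < w -> 0 <= a -> 0 < e ->
  exists2 y, y < a & forall c, 0 <= c -> y < c -> c <= a -> a `^ w - c `^ w < e.
Proof.
move=> w0 a0 e0; have [neg|pos] := ltP (a `^ w - e) 0.
  exists (-1); first by rewrite (lt_le_trans _ a0) ?ltrN10.
  by move=> c _ _ _; have := powR_ge0 c w; lra.
exists ((a `^ w - e) `^ w^-1).
  rewrite -[X in _ < X](powRKV w0 a0).
  by apply: gt0_ltr_powR; rewrite ?nnegrE ?powR_ge0 ?invr_gt0 // ltrBlDr ltrDl.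
move=> c c0 yc _; rewrite ltrBlDr addrC -ltrBlDr.
rewrite -[X in X < _](powRVK w0 pos).
by apply: gt0_ltr_powR; rewrite ?nnegrE ?powR_ge0.
Qed.

End powR_facts.

(* Rationals clamped to [[0, +oo)], the domain on which [s] is monotone. *)
Definition nnratr (R : realType) (q : rat) : R := Num.max 0 (ratr q).

Lemma nnratr_ge0 (R : realType) (q : rat) : 0 <= nnratr R q.
Proof. by rewrite le_max lexx. Qed.

Lemma nnratr_approx (R : realType) (a e : R) : 0 <= a -> 0 < e ->
  exists q : rat, nnratr R q <= a /\ `|a - nnratr R q| < e.
Proof.
move=> a0 e0; have [q] := @rat_in_itvoo R (a - e) a ltac:(lra).
rewrite in_itv /= => /andP[eq qa]; exists q.
have le_qa : nnratr R q <= a by rewrite ge_max a0 ltW.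
split => //; rewrite ger0_norm ?subr_ge0 //.
have : ratr q <= nnratr R q by rewrite le_max lexx orbT.
lra.
Qed.

Section star.
Variables (R : realType) (s : R -> R -> R).
Hypothesis hs : star_hyp s.
Implicit Types a b r C : R.

Lemma star_continuous : {within [set p : R * R | 0 <= p.1 /\ 0 <= p.2],
  continuous (fun p : R * R => s p.1 p.2)}.
Proof. by case: hs. Qed.

Lemma star_le2 (a a' b b' : R) : 0 <= a -> 0 <= b -> a <= a' -> b <= b' ->
  s a b <= s a' b'.
Proof. by case: hs => _ H _ _; exact: H. Qed.

Lemma star_ge0 a b : 0 <= a -> 0 <= b -> 0 <= s a b.
Proof. by case: hs => _ _ H _; exact: H. Qed.

Lemma star_le_min a b : 0 <= a -> 0 <= b -> s a b <= Num.min a b.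
Proof. by case: hs => _ _ _ H; exact: H. Qed.

Lemma star_gt_near a b r : 0 <= a -> 0 <= b -> r < s a b ->
  exists2 e : R, 0 < e & forall x y : R, 0 <= x -> 0 <= y ->
    `|a - x| < e -> `|b - y| < e -> r < s x y.
Proof.
move=> a0 b0 rab.
have nbhs_gt : nbhs (s a b) [set y | r < y].
  by apply: open_nbhs_nbhs; split; [exact: open_gt|].
have := @star_continuous (a, b) _ nbhs_gt.
have [_|[]] := nbhs_subspaceP [set p : R * R | 0 <= p.1 /\ 0 <= p.2] (a, b);
  last by split.
rewrite /= withinE /= => -[V /nbhs_ballP[e e0 eV] defV].
exists e => // x y x0 y0 ax bx.
have : (V `&` [set p | 0 <= p.1 /\ 0 <= p.2]) (x, y) by split => //; exact: eV.
by rewrite -defV => -[].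
Qed.

Lemma star_le_approx a b C : 0 <= a -> 0 <= b ->
  (forall e : R, 0 < e -> exists x y : R,
     [/\ 0 <= x, 0 <= y, `|a - x| < e, `|b - y| < e & s x y <= C]) ->
  s a b <= C.
Proof.
move=> a0 b0 approx; rewrite leNgt; apply/negP => /(star_gt_near a0 b0)[e e0 near].
have [x [y [x0 y0 ax bx]]] := approx e e0.
by apply/negP; rewrite -ltNge; exact: near.
Qed.

Lemma star_gt_rat a b r : 0 <= a -> 0 <= b -> r < s a b ->
  exists q1 q2, [/\ nnratr R q1 <= a, nnratr R q2 <= b &
                    r < s (nnratr R q1) (nnratr R q2)].
Proof.
move=> a0 b0 /(star_gt_near a0 b0)[e e0 near].
have [q1 [q1a aq1]] := nnratr_approx a0 e0.
have [q2 [q2b bq2]] := nnratr_approx b0 e0.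
by exists q1, q2; split => //; apply: near; rewrite ?nnratr_ge0.
Qed.

End star.

Lemma measurable_superlevel (d : measure_display) (X : measurableType d)
    (R : realType) (f : X -> \bar R) (t : \bar R) :
  measurable_fun setT f -> measurable [set x | (t <= f x)%E].
Proof.
by move=> mf; rewrite -[X in measurable X]setTI; exact: emeasurable_fun_c_infty.
Qed.

Section estar.
Local Open Scope ereal_scope.
Variables (R : realType) (s : R -> R -> R).
Hypothesis hs : star_hyp s.

Lemma estar_ge (a b : R) (x y : \bar R) : (0 <= a)%R -> (0 <= b)%R ->
  a%:E <= x -> b%:E <= y -> (s a b)%:E <= estar s x y.
Proof.
have nat_ub (c : R) : (0 <= c)%R -> (c <= (Num.bound c)%:R)%R.
  by move=> c0; exact/ltW/archi_boundP.
move=> a0 b0; case: x => [x| |]; case: y => [y| |] //=;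
  rewrite ?leeNy_eq ?lee_fin //= => ax yb.
- exact: star_le2.
- apply: le_trans (ereal_sup_ubound _); last by exists (Num.bound b).
  by rewrite lee_fin star_le2 ?nat_ub.
- apply: le_trans (ereal_sup_ubound _); last by exists (Num.bound a).
  by rewrite lee_fin star_le2 ?nat_ub.
- set n := Num.bound (Num.max a b).
  apply: le_trans (ereal_sup_ubound _); last by exists n.
  have := nat_ub (Num.max a b); rewrite le_max a0 ge_max => /(_ isT) /andP[an bn].
  by rewrite lee_fin star_le2.
Qed.

Lemma estar_ge0 (x y : \bar R) : 0 <= x -> 0 <= y -> 0 <= estar s x y.
Proof.
move=> x0 y0; apply: le_trans (estar_ge (lexx 0%R) (lexx 0%R) x0 y0).
by rewrite lee_fin star_ge0.
Qed.

Lemma estar_gt (x y : \bar R) (r : R) : 0 <= x -> 0 <= y ->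
  r%:E < estar s x y ->
  exists a b : R, [/\ (0 <= a)%R, (0 <= b)%R, a%:E <= x, b%:E <= y &
                      (r < s a b)%R].
Proof.
case: x => [x| |]; case: y => [y| |] //=; rewrite ?lee_fin => x0 y0.
- by rewrite lte_fin => ?; exists x, y.
- move=> /ereal_sup_gt[_ [n _ <-]]; rewrite lte_fin => ?.
  by exists x, n%:R; rewrite ?leey.
- move=> /ereal_sup_gt[_ [n _ <-]]; rewrite lte_fin => ?.
  by exists n%:R, y; rewrite ?leey.
- move=> /ereal_sup_gt[_ [n _ <-]]; rewrite lte_fin => ?.
  by exists n%:R, n%:R; rewrite ?leey.
Qed.

Lemma nonneg_measurable_estar (d : measure_display) (X : measurableType d)
    (f1 f2 : X -> \bar R) :
  nonneg_measurable f1 -> nonneg_measurable f2 ->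
  nonneg_measurable (fun x => estar s (f1 x) (f2 x)).
Proof.
move=> [mf1 f1_ge0] [mf2 f2_ge0]; split => [|x]; last exact: estar_ge0.
apply: (measurability _ (ErealGenOInfty.measurableE R)) => //.
move=> _ [_ [r ->] <-].
have -> : [set: X] `&` (fun x => estar s (f1 x) (f2 x)) @^-1` `]r%:E, +oo[ =
    \bigcup_(q1 : rat) \bigcup_(q2 : rat)
      if (r < s (nnratr R q1) (nnratr R q2))%R then
        [set x | (nnratr R q1)%:E <= f1 x] `&` [set x | (nnratr R q2)%:E <= f2 x]
      else set0.
  apply/seteqP; split => x /=.
    rewrite /preimage /= in_itv /= andbT => -[_].
    case/(estar_gt (f1_ge0 x) (f2_ge0 x)) => a [b [a0 b0 af bf rab]].
    have [q1 [q2 [q1a q2b rq]]] := star_gt_rat hs a0 b0 rab.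
    exists q1 => //; exists q2 => //; rewrite rq; split.
      exact: le_trans af.
    exact: le_trans bf.
  move=> [q1 _ [q2 _]]; case: ifPn => // rq [q1f q2f].
  split => //; rewrite /preimage /= in_itv /= andbT.
  apply: lt_le_trans (estar_ge (nnratr_ge0 _ _) (nnratr_ge0 _ _) q1f q2f).
  by rewrite lte_fin.
apply: bigcupT_measurable_rat => q1; apply: bigcupT_measurable_rat => q2.
by case: ifP => // _; apply: measurableI; exact: measurable_superlevel.
Qed.

End estar.

Section comonotone.
Local Open Scope ereal_scope.
Variables (X : Type) (R : realType) (f1 f2 : X -> \bar R).
Hypothesis hc : comonotone f1 f2.

Lemma comonotone_comp (phi psi : \bar R -> \bar R) :
  (forall x y, f1 x <= f1 y -> phi (f1 x) <= phi (f1 y)) ->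
  (forall x y, f2 x <= f2 y -> psi (f2 x) <= psi (f2 y)) ->
  comonotone (phi \o f1) (psi \o f2).
Proof.
move=> phi_le psi_le x y /= [lt1 lt2].
apply: (@hc x y); split.
- by rewrite ltNge; apply: contraTN lt1 => /phi_le; rewrite -leNgt.
- by rewrite ltNge; apply: contraTN lt2 => /psi_le; rewrite -leNgt.
Qed.

Lemma comonotone_superlevel_nested (a b : \bar R) :
  [set x | a <= f1 x] `<=` [set x | b <= f2 x] \/
  [set x | b <= f2 x] `<=` [set x | a <= f1 x].
Proof.
have [sub|nsub] := pselect ([set x | a <= f1 x] `<=` [set x | b <= f2 x]);
  [by left | right].
move=> y /= by2; apply: contrapT => /negP; rewrite -ltNge => f1ya.
apply: nsub => x /= ax; apply: contrapT => /negP; rewrite -ltNge => f2xb.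
apply: (@hc y x); split; first exact: lt_le_trans ax.
exact: lt_le_trans by2.
Qed.

End comonotone.

Section sugeno.
Local Open Scope ereal_scope.
Variables (d : measure_display) (X : measurableType d) (R : realType).
Variable m : set X -> \bar R.
Hypothesis hm : monotone_measure m.

Definition sugeno_level (g : X -> \bar R) (t : \bar R) : \bar R :=
  Order.min t (m [set x | t <= g x]).

Lemma monotone_measure_ge0 A : measurable A -> 0 <= m A.
Proof. by case: hm => H _ _ _; exact: H. Qed.

Lemma monotone_measure_le A B : measurable A -> measurable B -> A `<=` B ->
  m A <= m B.
Proof. by case: hm => _ _ _ H; exact: H. Qed.

Lemma sugeno_level_le_Su g t : 0 < t -> sugeno_level g t <= Su m g.
Proof. by move=> t0; apply: ereal_sup_ubound; exists t. Qed.

Lemma Su_ge0 g : measurable_fun setT g -> 0 <= Su m g.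
Proof.
move=> mg; apply: le_trans (sugeno_level_le_Su g lte01).
by rewrite le_min lee01 monotone_measure_ge0 //; exact: measurable_superlevel.
Qed.

Lemma Su_approx g (y : R) : measurable_fun setT g ->
  y%:E < Su m g -> Su m g < +oo ->
  exists t c : R, [/\ (0 < t)%R, (0 <= c)%R, (y < c)%R &
                      c%:E = sugeno_level g t%:E].
Proof.
move=> mg /ereal_sup_gt[_ [t t0 <-]] yt Sfin.
have level_fin (u : R) : (0 < u)%R ->
    exists c : R, (0 <= c)%R /\ c%:E = sugeno_level g u%:E.
  move=> u0; have m0 := monotone_measure_ge0 (measurable_superlevel u%:E mg).
  have lvl0 : 0 <= sugeno_level g u%:E by rewrite le_min m0 lee_fin ltW.
  have lvlu : sugeno_level g u%:E <= u%:E by rewrite ge_min lexx.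
  exists (fine (sugeno_level g u%:E)); rewrite fine_ge0 // fineK //.
  by rewrite ge0_fin_numE // (le_lt_trans lvlu) ?ltry.
case: t t0 yt => [t| |] // t0 yt.
  have [c [c0 ct]] := level_fin t t0.
  by exists t, c; split => //; rewrite -lte_fin ct.
(* At [t = +oo] the level set [{g = +oo}] has finite measure [M], and the
   finite level [M + 1] already does at least as well. *)
set L := [set x | +oo <= g x] in yt *.
have mL : measurable L by exact: measurable_superlevel.
have Lfin : m L \is a fin_num.
  rewrite ge0_fin_numE ?monotone_measure_ge0 //; apply: le_lt_trans Sfin.
  by have := sugeno_level_le_Su g (ltry 0%R); rewrite /sugeno_level min_r ?leey.
have t0' : (0 < fine (m L) + 1)%R by rewrite ltr_wpDl ?fine_ge0 ?monotone_measure_ge0.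
have [c [c0 ct]] := level_fin _ t0'.
exists (fine (m L) + 1)%R, c; split => //; rewrite -lte_fin ct.
apply: lt_le_trans yt _; rewrite /= min_r ?leey // le_min; apply/andP; split.
  by rewrite -{1}(fineK Lfin) lee_fin lerDl.
apply: monotone_measure_le => //; first exact: measurable_superlevel.
by move=> x; rewrite /L /= leye_eq => /eqP ->; exact: leey.
Qed.

Lemma Su_powR_approx g (w e : R) : measurable_fun setT g -> Su m g < +oo ->
  (0 < w)%R -> (0 < e)%R ->
  exists t c : R, [/\ (0 < t)%R, (0 <= c)%R, c%:E <= sugeno_level g t%:E &
                      (`|fine (Su m g) `^ w - c `^ w| < e)%R].
Proof.
move=> mg Sfin w0 e0.
have Sf : Su m g \is a fin_num by rewrite ge0_fin_numE ?Su_ge0.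
have S_ge0 : (0 <= fine (Su m g))%R by rewrite fine_ge0 ?Su_ge0.
have [y yS close] := powR_left_approx w0 S_ge0 e0.
have [|t [c [t0 c0 yc lvl]]] := Su_approx (y := y) mg _ Sfin.
  by rewrite -(fineK Sf) lte_fin yS.
have cS : (c <= fine (Su m g))%R.
  by rewrite -lee_fin fineK // lvl sugeno_level_le_Su.
exists t, c; split; rewrite ?lvl //.
rewrite ger0_norm ?close // subr_ge0.
by apply: ge0_ler_powR; rewrite ?nnegrE ?(ltW w0) // (le_trans c0).
Qed.

End sugeno.

Lemma poweR_le_powRV (R : realType) (w t : R) (a : \bar R) : (0 < w)%R ->
  (0 <= t)%R -> (0 <= a)%E -> (t%:E <= poweR a w^-1)%E -> ((t `^ w)%:E <= a)%E.
Proof.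
move=> w0 t0; case: a => [a| _ _ |]; [|exact: leey|by rewrite leeNy_eq].
rewrite !lee_fin /= => a0 ta; rewrite -(powRVK w0 a0).
by apply: ge0_ler_powR; rewrite ?nnegrE ?powR_ge0 // ltW.
Qed.

Lemma poweR_le2 (R : realType) (r : R) (a b : \bar R) : (0 <= r)%R ->
  (0 <= a)%E -> (a <= b)%E -> (poweR a r <= poweR b r)%E.
Proof.
move=> r0 a0 ab; apply: gt0_ler_poweR => //; rewrite in_itv /= leey andbT //.
exact: le_trans ab.
Qed.

Section sugeno_star.
Local Open Scope ereal_scope.
Variables (R : realType) (s : R -> R -> R).
Hypothesis hs : star_hyp s.
Variables (d : measure_display) (X : measurableType d) (f1 f2 : X -> \bar R).
Hypotheses (hf1 : nonneg_measurable f1) (hf2 : nonneg_measurable f2).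
Hypothesis hc : comonotone f1 f2.
Variable m : set X -> \bar R.
Hypothesis hm : monotone_measure m.
Variable w : R.
Hypothesis w0 : (0 < w)%R.

Let g1 x := poweR (f1 x) w^-1.
Let g2 x := poweR (f2 x) w^-1.
Let h x := poweR (estar s (f1 x) (f2 x)) w^-1.

Let wV_ge0 : (0 <= w^-1)%R. Proof. by rewrite invr_ge0 ltW. Qed.

Let measurable_powV (f : X -> \bar R) : nonneg_measurable f ->
  measurable_fun setT (fun x => poweR (f x) w^-1).
Proof. by case=> mf _; exact: measurableT_comp (measurable_poweR _) mf. Qed.

Let estar_nonneg_measurable : nonneg_measurable (fun x => estar s (f1 x) (f2 x)).
Proof. exact: nonneg_measurable_estar. Qed.

Lemma powRV_superlevel_nested (t1 t2 : \bar R) :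
  [set x | t1 <= g1 x] `<=` [set x | t2 <= g2 x] \/
  [set x | t2 <= g2 x] `<=` [set x | t1 <= g1 x].
Proof.
have hg : comonotone g1 g2.
  refine (@comonotone_comp _ _ f1 f2 hc
    (fun a => poweR a w^-1) (fun a => poweR a w^-1) _ _).
    by move=> x y; apply: poweR_le2; case: hf1.
  by move=> x y; apply: poweR_le2; case: hf2.
exact: comonotone_superlevel_nested hg t1 t2.
Qed.

Lemma powRV_superlevelI_sub (t1 t2 : R) : (0 <= t1)%R -> (0 <= t2)%R ->
  [set x | t1%:E <= g1 x] `&` [set x | t2%:E <= g2 x] `<=`
  [set x | ((s (t1 `^ w) (t2 `^ w)) `^ w^-1)%:E <= h x].
Proof.
move=> t10 t20 x [/= t1x t2x]; rewrite -poweR_EFin; apply: poweR_le2 => //.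
  by rewrite lee_fin star_ge0 ?powR_ge0.
case: hf1 => _ f1_ge0; case: hf2 => _ f2_ge0.
by apply: estar_ge; rewrite ?powR_ge0 // poweR_le_powRV.
Qed.

Lemma star_sugeno_levels_le (t1 t2 c1 c2 : R) : (0 < t1)%R -> (0 < t2)%R ->
  (0 <= c1)%R -> (0 <= c2)%R ->
  c1%:E <= sugeno_level m g1 t1%:E -> c2%:E <= sugeno_level m g2 t2%:E ->
  (s (c1 `^ w) (c2 `^ w))%:E <= poweR (Su m h) w.
Proof.
move=> t10 t20 c10 c20; rewrite !le_min !lee_fin => /andP[c1t c1m] /andP[c2t c2m].
set u := s (c1 `^ w) (c2 `^ w).
have u0 : (0 <= u)%R by rewrite star_ge0 ?powR_ge0.
have [->|u_neq0] := eqVneq u 0%R; first exact: poweR_ge0.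
(* The [w]-th root [v] of [u] lies below [c1], [c2] and the level [tau] that
   [h] reaches on the intersection of the two superlevel sets. *)
set v := (u `^ w^-1)%R; set tau := ((s (t1 `^ w) (t2 `^ w)) `^ w^-1)%R.
have u_le_c : (u <= c1 `^ w /\ u <= c2 `^ w)%R.
  by have := star_le_min hs (powR_ge0 c1 w) (powR_ge0 c2 w); rewrite le_min => /andP.
have v_le_c (c : R) : (0 <= c)%R -> (u <= c `^ w)%R -> (v <= c)%R.
  move=> c0 uc; rewrite -(powRKV w0 c0).
  by apply: ge0_ler_powR; rewrite ?nnegrE ?powR_ge0.
have u_le : (u <= s (t1 `^ w) (t2 `^ w))%R.
  have [w_ge0 t1_ge0 t2_ge0] := And3 (ltW w0) (ltW t10) (ltW t20).
  by apply: (star_le2 hs); rewrite ?powR_ge0 //; apply: ge0_ler_powR.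
have v_le_tau : (v <= tau)%R.
  by apply: (ge0_ler_powR wV_ge0); rewrite ?nnegrE // (le_trans u0).
have v_gt0 : (0 < v)%R by rewrite powR_gt0 // lt_neqAle eq_sym u_neq0.
have mL1 : measurable [set x | t1%:E <= g1 x].
  by apply: measurable_superlevel; exact: measurable_powV.
have mL2 : measurable [set x | t2%:E <= g2 x].
  by apply: measurable_superlevel; exact: measurable_powV.
have mH : measurable [set x | tau%:E <= h x].
  by apply: measurable_superlevel; exact: measurable_powV.
have sub := powRV_superlevelI_sub (ltW t10) (ltW t20).
have v_le_mH : v%:E <= m [set x | tau%:E <= h x].
  have [L12|L21] := powRV_superlevel_nested t1%:E t2%:E.
  - apply: le_trans (monotone_measure_le hm mL1 mH _).
      by apply: le_trans c1m; rewrite lee_fin v_le_c; case: u_le_c.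
    by move=> x L1x; apply: sub; split => //; exact: L12.
  - apply: le_trans (monotone_measure_le hm mL2 mH _).
      by apply: le_trans c2m; rewrite lee_fin v_le_c; case: u_le_c.
    by move=> x L2x; apply: sub; split => //; exact: L21.
have v_le_Su : v%:E <= Su m h.
  have tau_gt0 : 0 < tau%:E by rewrite lte_fin (lt_le_trans v_gt0 v_le_tau).
  apply: le_trans (sugeno_level_le_Su m h tau_gt0).
  by rewrite le_min lee_fin v_le_tau.
rewrite -(powRVK w0 u0) -/v -poweR_EFin.
by apply: (poweR_le2 (ltW w0) _ v_le_Su); rewrite lee_fin ltW.
Qed.

Lemma estar_Su_powR_le : Su m g1 < +oo -> Su m g2 < +oo ->
  estar s (poweR (Su m g1) w) (poweR (Su m g2) w) <= poweR (Su m h) w.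
Proof.
move=> S1lt S2lt; have [mg1 mg2] := (measurable_powV hf1, measurable_powV hf2).
have S1f : Su m g1 \is a fin_num by rewrite ge0_fin_numE ?Su_ge0.
have S2f : Su m g2 \is a fin_num by rewrite ge0_fin_numE ?Su_ge0.
rewrite -(fineK S1f) -(fineK S2f) !poweR_EFin /=.
have [->|Sh_neqy] := eqVneq (Su m h) +oo; first by rewrite poweRyr ?gt_eqF ?leey.
have Shf : Su m h \is a fin_num.
  by rewrite ge0_fin_numE ?ltey // Su_ge0 //; exact: measurable_powV.
rewrite -(fineK Shf) poweR_EFin lee_fin.
apply: (star_le_approx hs); rewrite ?powR_ge0 // => e e0.
have [t1 [c1 [t10 c10 c1lvl close1]]] := Su_powR_approx hm mg1 S1lt w0 e0.
have [t2 [c2 [t20 c20 c2lvl close2]]] := Su_powR_approx hm mg2 S2lt w0 e0.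
exists (c1 `^ w)%R, (c2 `^ w)%R; split; rewrite ?powR_ge0 //.
rewrite -lee_fin -poweR_EFin fineK //.
exact: star_sugeno_levels_le t10 t20 c10 c20 c1lvl c2lvl.
Qed.

End sugeno_star.

Theorem corollary3p8 (d : measure_display) (X : measurableType d)
  (R : realType) (f1 f2 : X -> \bar R) (s : R -> R -> R)
  (w0 w1 w2 xi0 xi1 xi2 : R) (m : set X -> \bar R) :
  nonneg_measurable f1 -> nonneg_measurable f2 -> comonotone f1 f2 ->
  star_hyp s ->
  0 < w0 -> 0 < w1 -> 0 < w2 -> 0 < xi0 -> 0 < xi1 -> 0 < xi2 ->
  (forall x : R, 0 <= x ->
     [/\ x `^ (1 / (xi0 * w0)) <= x,
         x <= x `^ (1 / (xi1 * w1)),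
         x <= x `^ (1 / (xi2 * w2)),
         x `^ (w1 / w0) <= x &
         x `^ (w2 / w0) <= x]) ->
  monotone_measure m ->
  (Su m (fun x => poweR (f1 x) xi1) < +oo)%E ->
  (Su m (fun x => poweR (f2 x) xi2) < +oo)%E ->
  (estar s (poweR (Su m (fun x => poweR (f1 x) xi1)) w1)
           (poweR (Su m (fun x => poweR (f2 x) xi2)) w2)
   <= poweR (Su m (fun x => poweR (estar s (f1 x) (f2 x)) xi0)) w0)%E.
Proof.
move=> hf1 hf2 hc hs w0_gt0 w1_gt0 w2_gt0 _ _ _ hx hm S1lt S2lt.
have inv_of (xi w : R) : 0 < w -> 1 / (xi * w) = 1 -> xi = w^-1.
  by move=> w_gt0 /divr1_eq /(congr1 (fun y => y / w)); rewrite mulfK ?gt_eqF // div1r.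
have xi0E : xi0 = w0^-1.
  by apply/inv_of/powR_le_id_eq1 => // x /hx[].
have xi1E : xi1 = w1^-1.
  by apply/inv_of/powR_ge_id_eq1 => // x /hx[].
have xi2E : xi2 = w2^-1.
  by apply/inv_of/powR_ge_id_eq1 => // x /hx[].
have w1E : w1 = w0 by apply/divr1_eq/powR_le_id_eq1 => x /hx[].
have w2E : w2 = w0 by apply/divr1_eq/powR_le_id_eq1 => x /hx[].
subst xi0 xi1 xi2 w1 w2.
exact: estar_Su_powR_le.
Qed.
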